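(* Let $n\ge2$ and let $a,b\in H_n\rtimes S_n$ satisfy $\sigma_a=\sigma_b$. If there exists $x\in H_n$ with $x^{-1}ax=b$, then $t_{[i]}(a)=t_{[i]}(b)$ for every class $[i]_a$.
   Context: $\mathbb{N}=\{1,2,\dots\}$, $X_n=\{1,\dots,n\}\times\mathbb{N}$, permutations act on the right. $H_n$ is the group of bijections $g$ of $X_n$ with $z_i(g)\in\mathbb{N}$, $t_i(g)\in\mathbb{Z}$ such that $(i,m)g=(i,m+t_i(g))$ for all $m\ge z_i(g)$. $S_n$ acts by $(i,m)\sigma=(i\sigma,m)$, and $H_n\rtimes S_n\le\mathrm{Sym}(X_n)$ is generated by $H_n$ and these; each $g\in H_n\rtimes S_n$ is uniquely $g=\omega_g\sigma_g$ with $\omega_g\in H_n$, $\sigma_g\in S_n$, and $t_i(g):=t_i(\omega_g)$. The class $[i]_g$ is the orbit of $i\in\{1,\dots,n\}$ under $\langle\sigma_g\rangle$, and $t_{[i]}(g)=\sum_{k\in[i]_g}t_k(g)$ (since $\sigma_a=\sigma_b$, the classes of $a$ and $b$ coincide). *)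

From Stdlib Require Import ClassicalEpsilon.
From mathcomp Require Import all_boot all_order all_algebra all_fingroup.
Set Implicit Arguments. Unset Strict Implicit. Unset Printing Implicit Defensive.
Import GRing.Theory Num.Theory.

(* X_n = {1..n} x N encoded 0-based: the pair (i, m) : 'I_n * nat stands for
   (i+1, m+1).  Permutations of X_n are functions X n -> X n; the right action
   p g is written g p, so the product g h (first g, then h) is h \o g. *)
Definition X (n : nat) := ('I_n * nat)%type.

Definition eventual_shift n (g : X n -> X n) (i : 'I_n) (t : int) : Prop :=
  exists z : nat, forall m : nat, (z <= m)%N ->
    (g (i, m)).1 = i /\ ((g (i, m)).2%:Z = m%:Z + t)%R.

Definition inH n (g : X n -> X n) : Prop :=
  bijective g /\ forall i : 'I_n, exists t : int, eventual_shift g i t.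

Definition tr n (g : X n -> X n) (i : 'I_n) : int :=
  epsilon (inhabits 0%R) (fun t => eventual_shift g i t).

Definition permX n (s : {perm 'I_n}) (p : X n) : X n := (s p.1, p.2).

Definition decomp n (g : X n -> X n) (om : X n -> X n) (s : {perm 'I_n}) : Prop :=
  inH om /\ forall p, g p = permX s (om p).

From mathcomp Require Import all_boot all_order all_algebra all_fingroup.
From Stdlib Require Import ClassicalEpsilon.
From mathcomp Require Import zify.
Import GRing.Theory.
Set Implicit Arguments. Unset Strict Implicit.

(* Every element of H_n ⋊ S_n maps the tail of ray k onto the tail of ray
   sigma(k) by a translation.  Following the ray of i once around its sigma-cycle,
   a^N (N the cycle length) translates the tail of ray i by t_[i](a), and likewise
   for b.  Since x is in H_n, x a^N = b^N x translates the tail of ray i both by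
   t_i(x) + t_[i](a) and by t_[i](b) + t_i(x), and translations are unique. *)

Section EventualTranslation.

Variable n : nat.
Implicit Types (g h : X n -> X n) (k : 'I_n).

Definition eventually_translates g k k' (t : int) : Prop :=
  exists z : nat, forall m : nat, (z <= m)%N ->
    (g (k, m)).1 = k' /\ ((g (k, m)).2%:Z = m%:Z + t)%R.

Lemma eventually_translates_ext g h k k' t :
  g =1 h -> eventually_translates g k k' t -> eventually_translates h k k' t.
Proof. by move=> E [z Hz]; exists z => m hm; rewrite -E; apply: Hz. Qed.

Lemma eventually_translates_comp g h k k' k'' t u :
  eventually_translates g k k' t -> eventually_translates h k' k'' u ->
  eventually_translates (h \o g) k k'' (t + u)%R.
Proof.
move=> [zg Hg] [zh Hh]; exists (zg + zh + absz t)%N => m hm /=.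
have [g1 g2] := Hg m ltac:(lia).
have -> : g (k, m) = (k', (g (k, m)).2) by case: (g (k, m)) g1 => ? ? /= ->.
have far : (zh <= (g (k, m)).2)%N by clear Hg; move: g2 hm; case: t => ? /=; lia.
have [-> h2] := Hh _ far; split => //=.
by rewrite h2 g2 addrA.
Qed.

Lemma eventually_translates_uniq g k k1 k2 t u :
  eventually_translates g k k1 t -> eventually_translates g k k2 u -> t = u.
Proof.
move=> [z1 H1] [z2 H2].
have [_ E1] := H1 (z1 + z2)%N ltac:(lia).
have [_ E2] := H2 (z1 + z2)%N ltac:(lia).
lia.
Qed.

Lemma eventual_shift_tr g k :
  (exists t, eventual_shift g k t) -> eventual_shift g k (tr g k).
Proof. by move=> [t Ht]; exact: epsilon_spec (ex_intro _ t Ht). Qed.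

Lemma decomp_eventually_translates c om s k :
  decomp c om s -> eventually_translates c k (s k) (tr om k).
Proof.
move=> [[_ Hom] Ec]; have [z Hz] := eventual_shift_tr (Hom k).
by exists z => m hm; rewrite Ec /permX; have [/= -> ->] := Hz m hm.
Qed.

Lemma decomp_iter_eventually_translates c om s j k :
  decomp c om s ->
  eventually_translates (iter j c) k (iter j s k) (\sum_(y <- traject s k j) tr om y)%R.
Proof.
move=> dc; elim: j k => [|j IH] k.
  by exists 0%N => m _; rewrite big_nil addr0.
rewrite trajectS big_cons iterSr.
apply: (eventually_translates_ext (g := iter j c \o c)) => [p|]; first by rewrite /= -iterSr.
exact: eventually_translates_comp (decomp_eventually_translates k dc) (IH (s k)).
Qed.

Lemma decomp_porbit_eventually_translates c om s k :
  decomp c om s ->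
  eventually_translates (iter #|porbit s k| c) k k (\sum_(y in porbit s k) tr om y)%R.
Proof.
move=> dc; have := decomp_iter_eventually_translates #|porbit s k| k dc.
rewrite iter_porbit big_uniq ?uniq_traject_porbit //.
by under eq_bigl => y do rewrite -porbit_traject.
Qed.

End EventualTranslation.

Lemma iter_conj (T : Type) (x a b : T -> T) :
  (forall p, x (a p) = b (x p)) -> forall j p, x (iter j a p) = iter j b (x p).
Proof. by move=> E; elim=> [|j IH] p //=; rewrite E IH. Qed.

Theorem lemma3p9 (n : nat) (hn : (2 <= n)%N)
  (a b : X n -> X n) (oma omb : X n -> X n) (sa sb : {perm 'I_n}) :
  decomp a oma sa -> decomp b omb sb -> sa = sb ->
  (exists x : X n -> X n, inH x /\ forall p, x (a p) = b (x p)) ->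
  forall i : 'I_n,
    (\sum_(k in porbit sa i) tr oma k)%R = (\sum_(k in porbit sb i) tr omb k)%R.
Proof.
move=> da db sa_sb [x [[_ Hx] conj_ab]] i; subst sb.
have [s Hs] := Hx i.
have via_a := eventually_translates_comp (decomp_porbit_eventually_translates i da) Hs.
have via_b := eventually_translates_comp Hs (decomp_porbit_eventually_translates i db).
have {}via_b : eventually_translates (x \o iter #|porbit sa i| a) i i
    (s + \sum_(k in porbit sa i) tr omb k)%R.
  by apply: (eventually_translates_ext _ via_b) => p; rewrite /= (iter_conj conj_ab).
have := eventually_translates_uniq via_a via_b.
by rewrite [X in X = _]addrC => /addrI.
Qed.
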